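(* Fix $m\ge 1$, $n\ge 0$, and let $\mathsf{G3Ldm}_{n}^{m}+\mathsf{PR}$ be the calculus $\mathsf{G3Ldm}_{n}^{m}$ extended with the propagation rules $(\mathsf{Pr}_i)$ for all $i\in Ag$ (see context). Then: (i) all sequents of the form $\mathcal{R}, w:\phi, w:\overline{\phi},\Gamma$ are derivable; (ii) substitution of labels is height-preserving admissible; (iii) all inference rules are height-preserving invertible; (iv) the rules $(\mathsf{wk})$: from $\mathcal{R},\Gamma$ infer $\mathcal{R},\mathcal{R}',\Gamma',\Gamma$; $(\mathsf{ctr})_{\mathsf{R}}$: from $\mathcal{R},\mathcal{R}',\mathcal{R}',\Gamma$ infer $\mathcal{R},\mathcal{R}',\Gamma$; and $(\mathsf{ctr})_{\mathsf{F}}$: from $\mathcal{R},\Gamma',\Gamma',\Gamma$ infer $\mathcal{R},\Gamma',\Gamma$ are height-preserving admissible.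
   Context: Language. $Ag=\{1,\dots,m\}$, $Var$ a countable set of propositional variables; formulas $\phi ::= p \mid \overline{p} \mid (\phi\wedge\phi) \mid (\phi\vee\phi) \mid \Box\phi \mid \Diamond\phi \mid [i]\phi \mid \langle i\rangle\phi$. $\overline{\phi}$ is obtained by swapping $p/\overline{p}$, $\wedge/\vee$, $\Box/\Diamond$, $[i]/\langle i\rangle$. Labelled sequents $\mathcal{R},\Gamma$: $\mathcal{R}$ a multiset of relational atoms $\mathcal{R}_ixy$ ($i\in Ag$, $x,y$ labels), $\Gamma$ a multiset of labelled formulas $x:\phi$. Derivations are finite trees whose leaves are $(\mathsf{id})$ instances; height = length of longest branch. Height-preserving admissibility of a rule means: if its premise is derivable with height $\le h$, so is its conclusion. Height-preserving invertibility means: if a conclusion of an instance is derivable with height $\le h$, so is each premise. Substitution admissibility: if $\Lambda$ is derivable with height $\le h$ then so is $\Lambda(y/x)$. Rules of $\mathsf{G3Ldm}_{n}^{m}$ (premise(s) / conclusion): $(\mathsf{id})$: / $\mathcal{R}, w:p, w:\overline{p},\Gamma$. $(\wedge)$: $\mathcal{R}, w:\phi\wedge\psi, w:\phi,\Gamma$ and $\mathcal{R}, w:\phi\wedge\psi, w:\psi,\Gamma$ / $\mathcal{R}, w:\phi\wedge\psi,\Gamma$. $(\vee)$: $\mathcal{R}, w:\phi\vee\psi, w:\phi, w:\psi,\Gamma$ / $\mathcal{R}, w:\phi\vee\psi,\Gamma$. $([i])$: $\mathcal{R},\mathcal{R}_iwv, v:\phi,\Gamma$ / $\mathcal{R}, w:[i]\phi,\Gamma$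 ($v$ fresh). $(\Box)$: $\mathcal{R}, w:\Box\phi, v:\phi,\Gamma$ / $\mathcal{R}, w:\Box\phi,\Gamma$ ($v$ fresh). $(\Diamond)$: $\mathcal{R}, w:\Diamond\phi, u:\phi,\Gamma$ / $\mathcal{R}, w:\Diamond\phi,\Gamma$. $(\mathsf{IOA})$: $\mathcal{R},\mathcal{R}_1u_1v,\dots,\mathcal{R}_mu_mv,\Gamma$ / $\mathcal{R},\Gamma$ ($v$ fresh). $(\langle i\rangle)$: $\mathcal{R},\mathcal{R}_iwu, w:\langle i\rangle\phi, u:\phi,\Gamma$ / $\mathcal{R},\mathcal{R}_iwu, w:\langle i\rangle\phi,\Gamma$. $(\mathsf{refl}_i)$: $\mathcal{R},\mathcal{R}_iww,\Gamma$ / $\mathcal{R},\Gamma$. $(\mathsf{eucl}_i)$: $\mathcal{R},\mathcal{R}_iwu,\mathcal{R}_iwv,\mathcal{R}_iuv,\Gamma$ / $\mathcal{R},\mathcal{R}_iwu,\mathcal{R}_iwv,\Gamma$. $(\mathsf{APC}^i_n)$ (only if $n>0$): premises $\mathcal{R},\mathcal{R}_iw_kw_j,\Gamma$ for all $0\le k\le n-1$, $k+1\le j\le n$ / $\mathcal{R},\Gamma$. ''Fresh'' means not occurring in the conclusion. One copy of the indexed rules for each $i\in Ag$. Propagation rule $(\mathsf{Pr}_i)$: $\mathcal{R}, w:\langle i\rangle\phi, u:\phi,\Gamma$ / $\mathcal{R}, w:\langle i\rangle\phi,\Gamma$, applicable only if $w=u$ or there are labels $w=z_0,z_1,\dots,z_k=u$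 ($k\ge1$) such that for each $l<k$, $\mathcal{R}_iz_lz_{l+1}\in\mathcal{R}$ or $\mathcal{R}_iz_{l+1}z_l\in\mathcal{R}$. (This is the condition that the propagation automaton of the sequent from $w$ to $u$, whose transitions in both directions are given by the $\mathcal{R}_i$-atoms, accepts a string in the language $\langle i\rangle^*$.) *)

From mathcomp Require Import ssreflect ssrbool eqtype ssrnat seq fintype.
From Stdlib Require Import List Permutation Relations.

Definition label := nat.
Definition pvar := nat.

(* Agents: Ag = {1,...,m} is represented by 'I_m (ordinal k stands for agent k+1). *)
Inductive form (m : nat) : Type :=
| Var  : pvar -> form m
| NVar : pvar -> form m
| And  : form m -> form m -> form m
| Or   : form m -> form m -> form m
| Box  : form m -> form m
| Dia  : form m -> form m
| Stit : 'I_m -> form m -> form m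
| DStit : 'I_m -> form m -> form m.
Arguments Var {m}. Arguments NVar {m}. Arguments And {m}. Arguments Or {m}.
Arguments Box {m}. Arguments Dia {m}. Arguments Stit {m}. Arguments DStit {m}.

Fixpoint neg {m} (f : form m) : form m :=
  match f with
  | Var p => NVar p
  | NVar p => Var p
  | And a b => Or (neg a) (neg b)
  | Or a b => And (neg a) (neg b)
  | Box a => Dia (neg a)
  | Dia a => Box (neg a)
  | Stit i a => DStit i (neg a)
  | DStit i a => Stit i (neg a)
  end.

Record ratom (m : nat) := RA { ra_ag : 'I_m; ra_src : label; ra_tgt : label }.
Arguments RA {m}. Arguments ra_ag {m}. Arguments ra_src {m}. Arguments ra_tgt {m}.

Definition lform (m : nat) := (label * form m)%type.

(* A labelled sequent R, Gamma: two lists, read as multisets (see seq_equiv). *)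
Definition sequent (m : nat) := (list (ratom m) * list (lform m))%type.

Definition seq_equiv {m} (S T : sequent m) : Prop :=
  Permutation (fst S) (fst T) /\ Permutation (snd S) (snd T).

Definition labels {m} (S : sequent m) : list label :=
  flat_map (fun a => ra_src a :: ra_tgt a :: nil) (fst S) ++ List.map fst (snd S).

Definition fresh {m} (v : label) (S : sequent m) : Prop := ~ In v (labels S).

(* Condition of the propagation rule (Pr_i): w = u or a chain of R_i-atoms of R
   (in either direction) from w to u, i.e. reflexive-transitive closure. *)
Definition ag_edge {m} (i : 'I_m) (R : list (ratom m)) (x y : label) : Prop :=
  In (RA i x y) R \/ In (RA i y x) R.

Definition prop_path {m} (i : 'I_m) (R : list (ratom m)) (w u : label) : Prop :=
  clos_refl_trans label (ag_edge i R) w u.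

Definition apc_pairs (n : nat) : list (nat * nat) :=
  flat_map (fun k => List.map (fun j => (k, j)) (List.seq (S k) (n - k))) (List.seq 0 n).

Inductive rule (m n : nat) : list (sequent m) -> sequent m -> Prop :=
| r_id : forall R w p G,
    rule m n nil (R, (w, Var p) :: (w, NVar p) :: G)
| r_and : forall R w a b G,
    rule m n ((R, (w, And a b) :: (w, a) :: G) :: (R, (w, And a b) :: (w, b) :: G) :: nil)
             (R, (w, And a b) :: G)
| r_or : forall R w a b G,
    rule m n ((R, (w, Or a b) :: (w, a) :: (w, b) :: G) :: nil) (R, (w, Or a b) :: G)
| r_stit : forall (i : 'I_m) R w v a G,
    fresh v (R, (w, Stit i a) :: G) ->
    rule m n ((RA i w v :: R, (v, a) :: G) :: nil) (R, (w, Stit i a) :: G)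
| r_box : forall R w v a G,
    fresh v (R, (w, Box a) :: G) ->
    rule m n ((R, (w, Box a) :: (v, a) :: G) :: nil) (R, (w, Box a) :: G)
| r_dia : forall R w u a G,
    rule m n ((R, (w, Dia a) :: (u, a) :: G) :: nil) (R, (w, Dia a) :: G)
| r_ioa : forall R G (u : 'I_m -> label) v,
    fresh v (R, G) ->
    rule m n ((List.map (fun i => RA i (u i) v) (enum 'I_m) ++ R, G) :: nil) (R, G)
| r_dstit : forall (i : 'I_m) R w u a G,
    rule m n ((RA i w u :: R, (w, DStit i a) :: (u, a) :: G) :: nil)
             (RA i w u :: R, (w, DStit i a) :: G)
| r_refl : forall (i : 'I_m) R w G,
    rule m n ((RA i w w :: R, G) :: nil) (R, G)
| r_eucl : forall (i : 'I_m) R w u v G,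
    rule m n ((RA i w u :: RA i w v :: RA i u v :: R, G) :: nil)
             (RA i w u :: RA i w v :: R, G)
| r_apc : forall (i : 'I_m) R G (w : nat -> label),
    0 < n ->
    rule m n (List.map (fun kj => (RA i (w (fst kj)) (w (snd kj)) :: R, G)) (apc_pairs n))
             (R, G)
| r_pr : forall (i : 'I_m) R w u a G,
    prop_path i R w u ->
    rule m n ((R, (w, DStit i a) :: (u, a) :: G) :: nil) (R, (w, DStit i a) :: G).

(* der m n h S : S is derivable in G3Ldm_n^m + PR with a derivation of height <= h
   (height counted as the number of nodes on the longest branch; an (id) leaf
   has height 1).  Sequents are identified up to multiset equality. *)
Inductive der (m n : nat) : nat -> sequent m -> Prop :=
| der_rule : forall (h : nat) (P : list (sequent m)) (C Sq : sequent m),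
    rule m n P C -> seq_equiv Sq C ->
    (forall Q, In Q P -> der m n h Q) ->
    der m n h.+1 Sq.

Definition subst_label (y x z : label) : label := if Nat.eqb z x then y else z.

Definition subst_seq {m} (y x : label) (S : sequent m) : sequent m :=
  (List.map (fun a => RA (ra_ag a) (subst_label y x (ra_src a)) (subst_label y x (ra_tgt a))) (fst S),
   List.map (fun lf => (subst_label y x (fst lf), snd lf)) (snd S)).

(* Every rule instance consists of an active part, fixed by the rule, and an arbitrary
   context; the premises of every rule except ([i]) contain its conclusion. Renaming labels and
   weakening are admissible together, by induction on derivations: the eigenvariable of the last
   rule is renamed to a label that stays fresh after weakening. Invertibility is then weakening,
   except for ([i]), which is inverted by induction on height, commuting the inversion with the
   last rule whenever [i]phi is not principal in it. Contraction is proved by induction on height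
   in the same way. Generalised initial sequents are built by induction on phi, the dual
   connectives following from the fact that [neg] is an involution. *)

From Pilot Require Import Defs.
From mathcomp Require Import ssreflect ssrfun ssrbool eqtype ssrnat seq fintype.
From Stdlib Require Import List Permutation Relations.

(* Arguments of type [list] are parsed in [seq_scope], where [++] would be [cat]; the statement
   uses [app]. *)
Local Notation "x ++ y" := (app x y) : seq_scope.

Lemma perm_pull {A} (X L R R' : list A) :
  Permutation R (X ++ R') -> Permutation L R' -> Permutation (X ++ L) R.
Proof.
by move=> HR HL; apply: Permutation_trans (Permutation_sym HR); apply: Permutation_app_head.
Qed.

Lemma perm_pull_last {A} (X R : list A) : Permutation R (X ++ nil) -> Permutation X R.
Proof. by rewrite app_nil_r => /Permutation_sym. Qed.

Lemma perm_find_cons {A} (X R R' : list A) y :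
  Permutation R (X ++ R') -> Permutation (y :: R) (X ++ y :: R').
Proof. by move=> H; apply: Permutation_trans (Permutation_middle _ _ _); constructor. Qed.

Lemma perm_find_catl {A} (X R1 R2 R' : list A) :
  Permutation R1 (X ++ R') -> Permutation (R1 ++ R2) (X ++ R' ++ R2).
Proof. by rewrite app_assoc; apply: Permutation_app_tail. Qed.

Lemma perm_find_catr {A} (X R1 R2 R' : list A) :
  Permutation R2 (X ++ R') -> Permutation (R1 ++ R2) (X ++ R1 ++ R').
Proof.
move=> H; apply: Permutation_trans (Permutation_app_head _ H) _.
by rewrite !app_assoc; apply/Permutation_app_tail/Permutation_app_comm.
Qed.

Lemma perm_find_all {A} (X : list A) : Permutation X (X ++ nil).
Proof. by rewrite app_nil_r. Qed.

(* [perm_solve] proves [Permutation L R] when both sides are built with [::] and [++] from the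
   same elements and list variables: [perm_find] locates each cons cell or block of [L] in [R],
   i.e. solves [Permutation R (X ++ ?R')]. *)
Ltac perm_find :=
  first
    [ apply: Permutation_refl
    | apply: perm_find_all
    | lazymatch goal with
      | |- Permutation (_ :: _) _ => apply: perm_find_cons; perm_find
      | |- Permutation (_ ++ _) _ =>
          first [apply: perm_find_catl; perm_find | apply: perm_find_catr; perm_find]
      end ].

Ltac perm_solve :=
  rewrite /= -?app_assoc /=;
  lazymatch goal with
  | |- Permutation nil _ => apply: Permutation_refl
  | |- Permutation (?x :: _) _ => eapply (perm_pull [:: x]); [perm_find | perm_solve]
  | |- Permutation (?X ++ _) _ => eapply (perm_pull X); [perm_find | perm_solve]
  | |- Permutation ?X _ => apply: perm_pull_last; perm_find
  end.

Lemma perm_cons_cat_cases {A} {x : A} {L C D} : Permutation (x :: L) (C ++ D) ->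
  (exists D', Permutation D (x :: D') /\ Permutation L (C ++ D')) \/
  (exists C', Permutation C (x :: C') /\ Permutation L (C' ++ D)).
Proof.
move=> H; case: (in_app_or _ _ _ (Permutation_in x H (or_introl erefl))).
- move=> /(in_split x) [C1 [C2 EC]]; subst C; right; exists (C1 ++ C2); split; first by perm_solve.
  by apply: (@Permutation_cons_inv _ _ _ x); rewrite H; perm_solve.
- move=> /(in_split x) [D1 [D2 ED]]; subst D; left; exists (D1 ++ D2); split; first by perm_solve.
  by apply: (@Permutation_cons_inv _ _ _ x); rewrite H; perm_solve.
Qed.

Lemma perm_contract_cases {A} {x : A} {L C D} : Permutation (x :: x :: L) (C ++ D) ->
  (exists D', [/\ Permutation D (x :: D'), Permutation (x :: L) (C ++ D') & In x (C ++ D')]) \/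
  (exists C', Permutation C (x :: x :: C')).
Proof.
case/perm_cons_cat_cases => [[D1 [HD HL]] | [C1 [HC HL]]].
  by left; exists D1; split => //; apply: (Permutation_in x HL); left.
case/perm_cons_cat_cases: HL => [[D2 [HD HL]] | [C2 [HC1 HL]]].
  left; exists D2; split => //; first by rewrite HC HL.
  by rewrite HC; left.
by right; exists C2; rewrite HC HC1.
Qed.

Lemma in_perm_cons {A} {x : A} {l} : In x l -> exists l', Permutation l (x :: l').
Proof.
by case/(in_split x) => [l1 [l2 ->]]; exists (l1 ++ l2); apply/Permutation_sym/Permutation_middle.
Qed.

Section Calculus.
Variables m n : nat.

Lemma der_equiv {h S T} : der m n h S -> seq_equiv S T -> der m n h T.
Proof.
case=> {}h P C S' Hr [H1 H2] Hp [E1 E2]; apply: der_rule Hr _ Hp.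
by split; [apply: Permutation_trans H1 | apply: Permutation_trans H2];
  apply: Permutation_sym.
Qed.

Lemma der_le {h h' S} : der m n h S -> h <= h' -> der m n h' S.
Proof.
move=> D; elim: D h' => {}h P C {}S Hr HS _ IH [|h'] //= Hh.
by apply: der_rule Hr HS _ => Q HQ; apply: IH.
Qed.

Lemma der0 {S} : ~ der m n 0 S.
Proof. by move=> D; inversion D. Qed.

Definition plug (A : sequent m) (R : list (ratom m)) (G : list (lform m)) : sequent m :=
  (A.1 ++ R, A.2 ++ G).

Lemma labels_incl (S T : sequent m) :
  incl S.1 T.1 -> incl S.2 T.2 -> incl (labels S) (labels T).
Proof.
move=> H1 H2 l; rewrite /labels !in_app_iff !in_flat_map !in_map_iff.
case=> [[a [/H1 Ha Hl]] | [x [<- /H2 Hx]]]; [left; exists a | right; exists x]; by [].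
Qed.

Lemma fresh_incl v (S T : sequent m) : incl S.1 T.1 -> incl S.2 T.2 -> fresh v T -> fresh v S.
Proof. by move=> H1 H2 Hv /(labels_incl _ _ H1 H2). Qed.

Lemma fresh_equiv {v} {S T : sequent m} : seq_equiv S T -> fresh v S -> fresh v T.
Proof.
by case=> H1 H2; apply: fresh_incl => x; apply: Permutation_in; apply: Permutation_sym.
Qed.

Lemma labels_plug l (A : sequent m) R G :
  In l (labels (plug A R G)) <-> In l (labels A) \/ In l (labels (R, G)).
Proof. rewrite /labels /plug /= flat_map_app map_app !in_app_iff; tauto. Qed.

Lemma fresh_plug v (A : sequent m) R G : fresh v (plug A R G) <-> fresh v A /\ fresh v (R, G).
Proof. rewrite /fresh labels_plug; tauto. Qed.

Lemma fresh_cons_atom v a R (G : list (lform m)) :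
  fresh v (a :: R, G) <-> [/\ ra_src a <> v, ra_tgt a <> v & fresh v (R, G)].
Proof. rewrite /fresh /=; split => [H | [? ? ?]]; first split; tauto. Qed.

Lemma fresh_cons_form v x (R : list (ratom m)) G :
  fresh v (R, x :: G) <-> x.1 <> v /\ fresh v (R, G).
Proof. rewrite /fresh /labels /= !in_app_iff /=; tauto. Qed.

Lemma list_max_succ_notin (L : list nat) : ~ In (list_max L).+1 L.
Proof.
move=> /(proj1 (Forall_forall _ L) (proj1 (list_max_le L _) (le_n _))) /leP.
by rewrite ltnn.
Qed.

Lemma exists_fresh_label (ls : list label) (Ss : list (sequent m)) :
  exists z, ~ In z ls /\ forall S, In S Ss -> fresh z S.
Proof.
have := list_max_succ_notin (ls ++ flat_map labels Ss).
set z := _.+1 => Hz; exists z; split => [Hl | S HS Hl]; apply: Hz; apply: in_or_app.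
  by left.
by right; apply/in_flat_map; exists S.
Qed.

Definition rename_atoms (f : label -> label) (R : list (ratom m)) : list (ratom m) :=
  List.map (fun a => RA (ra_ag a) (f (ra_src a)) (f (ra_tgt a))) R.

Definition rename_forms (f : label -> label) (G : list (lform m)) : list (lform m) :=
  List.map (fun x => (f x.1, x.2)) G.

Definition rename_seq (f : label -> label) (S : sequent m) : sequent m :=
  (rename_atoms f S.1, rename_forms f S.2).

Definition fun_upd (f : label -> label) (x y : label) : label -> label :=
  fun l => if l == x then y else f l.

Lemma rename_seq_id (S : sequent m) : rename_seq id S = S.
Proof.
case: S => R G; rewrite /rename_seq /rename_atoms /rename_forms /=.
by rewrite (map_ext_in _ id R) ?(map_ext_in _ id G) ?map_id // => [[]|[]].
Qed.

Lemma rename_atoms_cat f (R1 R2 : list (ratom m)) :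
  rename_atoms f (R1 ++ R2) = rename_atoms f R1 ++ rename_atoms f R2.
Proof. exact: map_app. Qed.

Lemma rename_forms_cat f (G1 G2 : list (lform m)) :
  rename_forms f (G1 ++ G2) = rename_forms f G1 ++ rename_forms f G2.
Proof. exact: map_app. Qed.

Lemma rename_seq_plug f (A : sequent m) R G :
  rename_seq f (plug A R G) = plug (rename_seq f A) (rename_atoms f R) (rename_forms f G).
Proof. by rewrite /rename_seq /plug /= rename_atoms_cat rename_forms_cat. Qed.

Lemma rename_seq_ext_in f g (S : sequent m) :
  (forall l, In l (labels S) -> f l = g l) -> rename_seq f S = rename_seq g S.
Proof.
move=> Hfg; rewrite /rename_seq /rename_atoms /rename_forms; congr pair.
  apply: map_ext_in => a Ha; rewrite !Hfg //; apply: in_or_app; left;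
  by apply/in_flat_map; exists a; split; rewrite /=; auto.
apply: map_ext_in => x Hx; rewrite Hfg //; apply: in_or_app; right.
exact: in_map.
Qed.

Lemma seq_equiv_rename f {S T : sequent m} :
  seq_equiv S T -> seq_equiv (rename_seq f S) (rename_seq f T).
Proof. by case=> H1 H2; split; apply: Permutation_map. Qed.

Lemma prop_path_incl (i : 'I_m) R R' w u : incl R R' -> prop_path i R w u -> prop_path i R' w u.
Proof.
move=> HR; elim=> [x y [] /HR Hxy | x | x y z _ IH1 _ IH2].
- by apply/rt_step; left.
- by apply/rt_step; right.
- exact: rt_refl.
- exact: rt_trans IH1 IH2.
Qed.

Lemma prop_path_rename f (i : 'I_m) R w u :
  prop_path i R w u -> prop_path i (rename_atoms f R) (f w) (f u).
Proof.
elim=> [x y [] Hxy | x | x y z _ IH1 _ IH2].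
- by apply/rt_step; left; apply: (in_map _ _ _ Hxy).
- by apply/rt_step; right; apply: (in_map _ _ _ Hxy).
- exact: rt_refl.
- exact: rt_trans IH1 IH2.
Qed.

(** * Rule schemas *)

(* A rule instance is a schema (its active part: principal formulas and atoms,
   eigenvariable, side condition) plugged into a context [R, G]. *)
Inductive schema : Type :=
| Sid of label & pvar
| Sand of label & form m & form m
| Sor of label & form m & form m
| Sstit of 'I_m & label & label & form m
| Sbox of label & label & form m
| Sdia of label & label & form m
| Sioa of ('I_m -> label) & label
| Sdstit of 'I_m & label & label & form m
| Srefl of 'I_m & label
| Seucl of 'I_m & label & label & label
| Sapc of 'I_m & (nat -> label)
| Spr of 'I_m & label & label & form m.

Definition concl (s : schema) : sequent m :=
  match s with
  | Sid w p => ([::], [:: (w, Var p); (w, NVar p)])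
  | Sand w a b => ([::], [:: (w, And a b)])
  | Sor w a b => ([::], [:: (w, Or a b)])
  | Sstit i w _ a => ([::], [:: (w, Stit i a)])
  | Sbox w _ a => ([::], [:: (w, Box a)])
  | Sdia w _ a => ([::], [:: (w, Dia a)])
  | Sioa _ _ | Srefl _ _ | Sapc _ _ => ([::], [::])
  | Sdstit i w u a => ([:: RA i w u], [:: (w, DStit i a)])
  | Seucl i w u v => ([:: RA i w u; RA i w v], [::])
  | Spr i w _ a => ([::], [:: (w, DStit i a)])
  end.

Definition prems (s : schema) : list (sequent m) :=
  match s with
  | Sid _ _ => [::]
  | Sand w a b => [:: ([::], [:: (w, And a b); (w, a)]); ([::], [:: (w, And a b); (w, b)])]
  | Sor w a b => [:: ([::], [:: (w, Or a b); (w, a); (w, b)])]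
  | Sstit i w v a => [:: ([:: RA i w v], [:: (v, a)])]
  | Sbox w v a => [:: ([::], [:: (w, Box a); (v, a)])]
  | Sdia w u a => [:: ([::], [:: (w, Dia a); (u, a)])]
  | Sioa u v => [:: (List.map (fun i => RA i (u i) v) (enum 'I_m), [::])]
  | Sdstit i w u a => [:: ([:: RA i w u], [:: (w, DStit i a); (u, a)])]
  | Srefl i w => [:: ([:: RA i w w], [::])]
  | Seucl i w u v => [:: ([:: RA i w u; RA i w v; RA i u v], [::])]
  | Sapc i w => List.map (fun kj => ([:: RA i (w kj.1) (w kj.2)], [::])) (apc_pairs n)
  | Spr i w u a => [:: ([::], [:: (w, DStit i a); (u, a)])]
  end.

Definition eigen (s : schema) : option label :=
  match s with
  | Sstit _ _ v _ | Sbox _ v _ | Sioa _ v => Some v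
  | _ => None
  end.

(* [R] is the whole relational part of the conclusion. *)
Definition side (s : schema) (R : list (ratom m)) : Prop :=
  match s with
  | Sapc _ _ => 0 < n
  | Spr i w u _ => prop_path i R w u
  | _ => True
  end.

Definition instance (s : schema) (R : list (ratom m)) (G : list (lform m)) : Prop :=
  side s ((concl s).1 ++ R) /\
  (if eigen s is Some v then fresh v (plug (concl s) R G) else True).

Lemma rule_instance {P C} : rule m n P C -> exists s R G,
  [/\ instance s R G, P = List.map (fun A => plug A R G) (prems s) & C = plug (concl s) R G].
Proof.
case=> [R w p G | R w a b G | R w a b G | i R w v a G Hv | R w v a G Hv | R w u a G
       | R G u v Hv | i R w u a G | i R w G | i R w u v G | i R G w Hn | i R w u a G Hp].
- by exists (Sid w p), R, G.
- by exists (Sand w a b), R, G.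
- by exists (Sor w a b), R, G.
- by exists (Sstit i w v a), R, G.
- by exists (Sbox w v a), R, G.
- by exists (Sdia w u a), R, G.
- by exists (Sioa u v), R, G.
- by exists (Sdstit i w u a), R, G.
- by exists (Srefl i w), R, G.
- by exists (Seucl i w u v), R, G.
- by exists (Sapc i w), R, G; rewrite map_map.
- by exists (Spr i w u a), R, G.
Qed.

Lemma instance_rule {s R G} :
  instance s R G -> rule m n (List.map (fun A => plug A R G) (prems s)) (plug (concl s) R G).
Proof.
case: s => [w p | w a b | w a b | i w v a | w v a | w u a | u v | i w u a | i w
           | i w u v | i w | i w u a] [? ?] /=;
  try by constructor.
by rewrite map_map; apply: r_apc.
Qed.

Ltac in_cases :=
  repeat match goal with
  | H : _ = _ \/ _ |- _ => case: H => [<- | H]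
  | H : False |- _ => case: H
  | H : In _ (List.map _ _) |- _ => case/in_map_iff: H => [? [<- H]]
  end.

Lemma prem_atoms_extend s A : In A (prems s) -> exists X, A.1 = (concl s).1 ++ X.
Proof. by case: s => /= *; in_cases; eexists. Qed.

Lemma stit_or_prem_forms_extend s :
  (exists i w v a, s = Sstit i w v a) \/
  (forall A, In A (prems s) -> exists Y, A.2 = (concl s).2 ++ Y).
Proof.
case: s => [||| i w v a |||||||| ] *; first [by left; exists i, w, v, a | right => A /= HA].
all: by in_cases; eexists.
Qed.

Lemma concl_stit s i w a : In (w, Stit i a) (concl s).2 -> exists v, s = Sstit i w v a.
Proof.
by case: s => /= *; repeat match goal with
  | H : _ \/ _ |- _ => case: H => H
  | H : False |- _ => case: H
  | H : (_, _) = (_, _) |- _ => case: H => *; subst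
  end; try discriminate; eexists.
Qed.

Lemma concl_forms_nodup s : NoDup (concl s).2.
Proof. by case: s => /= *; repeat constructor => //; case=> // []. Qed.

Lemma concl_atoms_nodup s : NoDup (concl s).1 \/ exists i w u, s = Seucl i w u u.
Proof.
case: s => [||||||||| i w u v ||] /=; try by intros; left; repeat constructor.
case: (eqVneq u v) => [<- | Huv]; first by right; exists i, w, u.
left; constructor; last by repeat constructor.
by case=> // [[Evu]]; rewrite Evu eqxx in Huv.
Qed.

Definition rename_schema (f : label -> label) (s : schema) : schema :=
  match s with
  | Sid w p => Sid (f w) p
  | Sand w a b => Sand (f w) a b
  | Sor w a b => Sor (f w) a b
  | Sstit i w v a => Sstit i (f w) (f v) a
  | Sbox w v a => Sbox (f w) (f v) a
  | Sdia w u a => Sdia (f w) (f u) a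
  | Sioa u v => Sioa (f \o u) (f v)
  | Sdstit i w u a => Sdstit i (f w) (f u) a
  | Srefl i w => Srefl i (f w)
  | Seucl i w u v => Seucl i (f w) (f u) (f v)
  | Sapc i w => Sapc i (f \o w)
  | Spr i w u a => Spr i (f w) (f u) a
  end.

Lemma concl_rename f s : concl (rename_schema f s) = rename_seq f (concl s).
Proof. by case: s. Qed.

Lemma prems_rename f s : prems (rename_schema f s) = List.map (rename_seq f) (prems s).
Proof. by case: s => //= *; rewrite /rename_seq /rename_atoms /= ?map_map. Qed.

Lemma eigen_rename f s : eigen (rename_schema f s) = omap f (eigen s).
Proof. by case: s. Qed.

Lemma side_rename f {s R} : side s R -> side (rename_schema f s) (rename_atoms f R).
Proof. by case: s => //= *; apply: prop_path_rename. Qed.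

Lemma side_incl {s R R'} : incl R R' -> side s R -> side s R'.
Proof. by case: s => //= i w u _ HR; apply: prop_path_incl. Qed.

Lemma instance_context s R G R' G' :
  instance s R G -> incl ((concl s).1 ++ R) ((concl s).1 ++ R') ->
  (forall v, eigen s = Some v -> fresh v (R, G) -> fresh v (R', G')) ->
  instance s R' G'.
Proof.
case=> Hs He HR Hfr; split; first exact: side_incl HR Hs.
case: (eigen s) He Hfr => // v /fresh_plug [Hv HRG] Hfr.
by apply/fresh_plug; split; last exact: Hfr.
Qed.

(* The eigenvariable is redirected to a label fresh for the renamed and weakened conclusion. *)
Lemma instance_rename {s R G} f R' G' : instance s R G -> exists f',
  [/\ rename_seq f' (concl s) = rename_seq f (concl s),
      rename_seq f' (R, G) = rename_seq f (R, G) &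
      instance (rename_schema f' s) (rename_atoms f R ++ R') (rename_forms f G ++ G')].
Proof.
case=> Hs He.
set T := plug (rename_seq f (concl s)) (rename_atoms f R ++ R') (rename_forms f G ++ G').
have [z [_ /(_ T (or_introl erefl)) Hz]] := exists_fresh_label [::] [:: T].
pose f' := if eigen s is Some e then fun_upd f e z else f.
have Hag S : incl (labels S) (labels (plug (concl s) R G)) -> rename_seq f' S = rename_seq f S.
  move=> HS; apply: rename_seq_ext_in => l /HS; rewrite /f'.
  case: (eigen s) He => // e He Hl; rewrite /fun_upd; case: eqP => // Ele.
  by subst; case: He.
have Hc : rename_seq f' (concl s) = rename_seq f (concl s).
  by apply: Hag => l Hl; apply/labels_plug; left.
exists f'; split => //.
  by apply: Hag => l Hl; apply/labels_plug; right.
split.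
  have /pair_equal_spec [HRf _] := Hag (plug (concl s) R G) (incl_refl _).
  apply: side_incl (side_rename f' Hs); rewrite concl_rename Hc HRf.
  by rewrite /= rename_atoms_cat app_assoc; apply: incl_appl.
by rewrite eigen_rename concl_rename Hc /f'; case: (eigen s) He => //= e _; rewrite /fun_upd eqxx.
Qed.

Lemma der_instance {h} s R G {S} :
  instance s R G -> seq_equiv S (plug (concl s) R G) ->
  (forall A, In A (prems s) -> der m n h (plug A R G)) -> der m n h.+1 S.
Proof.
move=> Hi HS Hp; apply: der_rule (instance_rule Hi) HS _.
by move=> Q /in_map_iff [A [<- HA]]; apply: Hp.
Qed.

Lemma derS_inv {h S} : der m n h.+1 S -> exists s R G,
  [/\ instance s R G, seq_equiv S (plug (concl s) R G)
    & forall A, In A (prems s) -> der m n h (plug A R G)].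
Proof.
move=> D; inversion D as [h' P C S' Hr HS Hp]; subst.
have [s [R [G [Hi EP EC]]]] := rule_instance Hr; subst.
by exists s, R, G; split => // A HA; apply: Hp; apply: in_map.
Qed.

(** * Renaming and weakening *)

Lemma der_rename_weaken {h S} f R' G' :
  der m n h S -> der m n h (rename_atoms f S.1 ++ R', rename_forms f S.2 ++ G').
Proof.
move=> D; elim: D f R' G' => {}h P C {}S Hr HS _ IH f R' G'.
have [s [R [G [Hi EP EC]]]] := rule_instance Hr; subst.
have [f' [Hc [HR HG] Hi']] := instance_rename f R' G' Hi.
apply: der_instance Hi' _ _.
  rewrite concl_rename Hc.
  case: (seq_equiv_rename f HS); rewrite rename_seq_plug => H1 H2.
  by split; rewrite /= app_assoc; apply: Permutation_app_tail.
rewrite prems_rename => _ /in_map_iff [A [<- HA]].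
have := IH _ (in_map _ _ _ HA) f' R' G'.
by rewrite /= rename_atoms_cat rename_forms_cat HR HG -!app_assoc.
Qed.

Lemma der_weaken {h R G} R' G' : der m n h (R, G) -> der m n h (R ++ R', G ++ G').
Proof. by move/(der_rename_weaken id R' G'); case: (rename_seq_id (R, G)) => -> ->. Qed.

Lemma der_rename {h S} f : der m n h S -> der m n h (rename_seq f S).
Proof. by move/(der_rename_weaken f [::] [::]); rewrite !app_nil_r. Qed.

(** * Invertibility *)

Lemma der_stit_eigen_rename {h R G i w z a} v :
  fresh z (R, (w, Stit i a) :: G) ->
  der m n h (RA i w z :: R, (z, a) :: G) -> der m n h (RA i w v :: R, (v, a) :: G).
Proof.
move=> /fresh_cons_form [/= Hwz Hz] /(der_rename (fun_upd id z v)).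
have /pair_equal_spec [ER EG] : rename_seq (fun_upd id z v) (R, G) = (R, G).
  rewrite -[RHS]rename_seq_id; apply: rename_seq_ext_in => l Hl.
  by rewrite /fun_upd; case: eqP => // Elz; subst; case: Hz.
rewrite -[(_ :: R, _)]/(plug ([:: RA i w z], [:: (z, a)]) R G) rename_seq_plug ER EG.
by rewrite /plug /= /fun_upd eqxx; case: eqP => // Ewz; case: Hwz.
Qed.

Lemma der_stit_inv {h R G i w a} v :
  der m n h (R, (w, Stit i a) :: G) -> der m n h (RA i w v :: R, (v, a) :: G).
Proof.
elim: h R G v => [|h IH] R G v D; first by case: (der0 D).
have [s [Rc [Gc [Hi [/= HR HG] Hp]]]] := derS_inv D.
case: (perm_cons_cat_cases HG) => [[G1 [HGc HG1]] | [C1 [HC HG1]]].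
- have [z [Hze /(_ _ (or_introl erefl)) Hz]] :=
    exists_fresh_label (if eigen s is Some e then [:: e] else [::]) [:: (R, (w, Stit i a) :: G)].
  apply: (der_stit_eigen_rename v Hz).
  apply: (der_instance s (RA i w z :: Rc) ((z, a) :: G1)).
  + apply: instance_context Hi _ _; first by move=> y; rewrite !in_app_iff /=; tauto.
    have EGc : seq_equiv (Rc, Gc) (Rc, (w, Stit i a) :: G1) by [].
    move=> e Es /(fresh_equiv EGc) /fresh_cons_form [/= Hwe He].
    have Hez : z <> e by move=> Eze; apply: Hze; rewrite Es Eze; left.
    by apply/fresh_cons_atom; split => //=; apply/fresh_cons_form; split.
  + by split; rewrite /= ?HR ?HG1; perm_solve.
  + move=> A HA.
    have E : seq_equiv (plug A Rc Gc) (A.1 ++ Rc, (w, Stit i a) :: A.2 ++ G1).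
      by split; rewrite /= ?HGc; perm_solve.
    by apply: der_equiv (IH _ _ z (der_equiv (Hp _ HA) E)) _; split; perm_solve.
- have [v' Es] := concl_stit s i w a (Permutation_in _ (Permutation_sym HC) (or_introl erefl)).
  subst s; case: Hi => _ /= Hv'.
  have [EC1] : (w, Stit i a) :: C1 = [:: (w, Stit i a)] := Permutation_length_1_inv HC.
  subst C1.
  apply: der_equiv (der_le (der_stit_eigen_rename v Hv' (Hp _ (or_introl erefl))) (leqnSn h)) _.
  by split; rewrite /= ?HR ?HG1.
Qed.

Lemma der_rule_inv h P C : rule m n P C -> der m n h C -> forall Q, In Q P -> der m n h Q.
Proof.
move=> /rule_instance [s [R [G [_ -> ->]]]] D _ /in_map_iff [A [<- HA]].
case: (stit_or_prem_forms_extend s) => [[i [w [v [a Es]]]] | Hext].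
  by subst s; case: HA => [<- | []]; apply: der_stit_inv.
have [X EX] := prem_atoms_extend s A HA; have [Y EY] := Hext A HA.
by apply: der_equiv (der_weaken X Y D) _; split; rewrite /= ?EX ?EY; perm_solve.
Qed.

(** * Contraction *)

Section Contraction.

Variable h : nat.
Hypothesis ctr_atom : forall R al G, der m n h (al :: al :: R, G) -> der m n h (al :: R, G).
Hypothesis ctr_form : forall R x G, der m n h (R, x :: x :: G) -> der m n h (R, x :: G).

(* An atom occurring twice among the principal atoms comes from (eucl_i) with [u = v];
   then the premise is contracted and closed with (refl_i). *)
Lemma ctr_atom_step R al G : der m n h.+1 (al :: al :: R, G) -> der m n h.+1 (al :: R, G).
Proof.
case/derS_inv => s [Rc [Gc [Hi [/= HR HG] Hp]]].
case: (perm_contract_cases HR) => [[Rc' [HRc HR' Hal]] | [C' HC]].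
  apply: (der_instance s Rc' Gc) => //.
    apply: instance_context Hi _ _ => [y | e _].
      rewrite !in_app_iff => -[Hy | /(Permutation_in y HRc) [<- | Hy]]; last by right.
        by left.
      exact/in_app_iff.
    by apply: fresh_incl => // y Hy; apply: (Permutation_in y (Permutation_sym HRc)); right.
  move=> A HA; have [X EX] := prem_atoms_extend s A HA.
  have [L HL] : exists L, Permutation (A.1 ++ Rc') (al :: L).
    by apply: in_perm_cons; move: Hal; rewrite EX !in_app_iff; tauto.
  apply: der_equiv (ctr_atom L al (A.2 ++ Gc) (der_equiv (Hp A HA) _)) _.
    by split => //=; rewrite HRc -HL; perm_solve.
  by split => //=; apply: Permutation_sym.
case: (concl_atoms_nodup s) => [Hnd | [i [w [u Es]]]].
  by have /NoDup_cons_iff [Hnin _] := Permutation_NoDup HC Hnd; case: Hnin; left.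
subst s; move: HC HR => /= HC HR.
have EC' : C' = [::] by case: C' HC => // ? ? /Permutation_length.
subst C'; have Eal : al = RA i w u.
  by case: (Permutation_in al (Permutation_sym HC) (or_introl erefl)) => [|[]].
subst al; have {}HR := Permutation_cons_inv (Permutation_cons_inv HR).
apply: der_rule (Defs.r_refl m n i (RA i w u :: Rc) u Gc) _ _; first by split; rewrite /= ?HR.
move=> _ [<- | []]; apply: der_equiv (ctr_atom _ _ _ (Hp _ (or_introl erefl))) _.
by split => /=; perm_solve.
Qed.

(* The only rule whose premise does not repeat its principal formula is ([i]);
   there the second copy is inverted, and the two fresh labels are identified. *)
Lemma ctr_form_step R x G : der m n h.+1 (R, x :: x :: G) -> der m n h.+1 (R, x :: G).
Proof.
case/derS_inv => s [Rc [Gc [Hi [/= HR HG] Hp]]].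
case: (perm_contract_cases HG) => [[Gc' [HGc HG' Hx]] | [C' HC]]; last first.
  by have /NoDup_cons_iff [Hnin _] := Permutation_NoDup HC (concl_forms_nodup s); case: Hnin; left.
have [Hprem | [i [w [v [a [Es Ex]]]]]] : (forall A, In A (prems s) -> In x (A.2 ++ Gc')) \/
    exists i w v a, s = Sstit i w v a /\ x = (w, Stit i a).
  case/in_app_iff: Hx => [HxC | HxG]; last by left => A _; apply/in_app_iff; right.
  case: (stit_or_prem_forms_extend s) => [[i [w [v [a Es]]]] | Hext].
    by right; exists i, w, v, a; split => //; subst s; case: HxC => [<- | []].
  by left => A HA; have [Y ->] := Hext A HA; rewrite -app_assoc; apply/in_app_iff; left.
- apply: (der_instance s Rc Gc') => //.
    apply: instance_context Hi (incl_refl _) _ => e _.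
    by apply: fresh_incl => // y Hy; apply: (Permutation_in y (Permutation_sym HGc)); right.
  move=> A HA; have [L HL] := in_perm_cons (Hprem A HA).
  apply: der_equiv (ctr_form (A.1 ++ Rc) x L (der_equiv (Hp A HA) _)) _.
    by split => //=; rewrite HGc -HL; perm_solve.
  by split => //=; apply: Permutation_sym.
- subst s x; case: Hi => _ /= Hv.
  set S1 := (RA i w v :: Rc, (w, Stit i a) :: (v, a) :: Gc').
  have D1 : der m n h S1.
    by apply: der_equiv (Hp _ (or_introl erefl)) _; split; rewrite /= ?HGc; perm_solve.
  have [v2 [_ /(_ S1 (or_introl erefl)) Hv2]] := exists_fresh_label [::] [:: S1].
  have D2 := der_stit_eigen_rename v Hv2 (der_stit_inv v2 D1).
  apply: (der_instance (Sstit i w v a) Rc Gc').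
  + split => //=; apply: fresh_incl Hv => // y [<- | Hy]; first by left.
    by right; apply: (Permutation_in y (Permutation_sym HGc)); right.
  + by split; rewrite /= ?HR.
  + by move=> _ [<- | []]; apply/ctr_form/ctr_atom.
Qed.

End Contraction.

Lemma der_contract h :
  (forall R al G, der m n h (al :: al :: R, G) -> der m n h (al :: R, G)) /\
  (forall R x G, der m n h (R, x :: x :: G) -> der m n h (R, x :: G)).
Proof.
elim: h => [|h [IHa IHf]]; first by split => R y G /der0.
by split => R y G; [apply: ctr_atom_step | apply: ctr_form_step].
Qed.

(** * Generalised initial sequents *)

Lemma neg_involutive (phi : form m) : neg (neg phi) = phi.
Proof. by elim: phi => //= [a -> b -> | a -> b -> | a -> | a -> | i a -> | i a ->]. Qed.

Definition initial (phi : form m) : Prop :=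
  forall R w G, exists h, der m n h (R, (w, phi) :: (w, neg phi) :: G).

Lemma initial_neg phi : initial phi -> initial (neg phi).
Proof.
move=> Hphi R w G; have [h D] := Hphi R w G; exists h.
by rewrite neg_involutive; apply: der_equiv D _; split; perm_solve.
Qed.

Lemma initial_var p : initial (Var p).
Proof. by move=> R w G; exists 1; apply: (der_instance (Sid w p) R G). Qed.

Lemma initial_and a b : initial a -> initial b -> initial (And a b).
Proof.
move=> Ha Hb R w G.
have [ha Da] := Ha R w ((w, And a b) :: (w, Or (neg a) (neg b)) :: (w, neg b) :: G).
have [hb Db] := Hb R w ((w, And a b) :: (w, Or (neg a) (neg b)) :: (w, neg a) :: G).
exists (maxn ha hb).+2.
apply: (der_instance (Sor w (neg a) (neg b)) R ((w, And a b) :: G)).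
- by [].
- by split; perm_solve.
- move=> _ [<- | []].
  apply: (der_instance (Sand w a b) R [:: (w, Or (neg a) (neg b)), (w, neg a), (w, neg b) & G]).
  + by [].
  + by split; perm_solve.
  + move=> _ [<- | [<- | []]].
      by apply: der_equiv (der_le Da (leq_maxl _ _)) _; split; perm_solve.
    by apply: der_equiv (der_le Db (leq_maxr _ _)) _; split; perm_solve.
Qed.

Lemma initial_box a : initial a -> initial (Box a).
Proof.
move=> Ha R w G; set S := (R, (w, Box a) :: (w, Dia (neg a)) :: G).
have [v [_ /(_ S (or_introl erefl)) Hv]] := exists_fresh_label [::] [:: S].
have [h D] := Ha R v ((w, Dia (neg a)) :: (w, Box a) :: G); exists h.+2.
apply: (der_instance (Sbox w v a) R ((w, Dia (neg a)) :: G)) => //.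
move=> _ [<- | []]; apply: (der_instance (Sdia w v (neg a)) R [:: (w, Box a), (v, a) & G]).
- by [].
- by split; perm_solve.
- by move=> _ [<- | []]; apply: der_equiv D _; split; perm_solve.
Qed.

Lemma initial_stit i a : initial a -> initial (Stit i a).
Proof.
move=> Ha R w G; set S := (R, (w, Stit i a) :: (w, DStit i (neg a)) :: G).
have [v [_ /(_ S (or_introl erefl)) Hv]] := exists_fresh_label [::] [:: S].
have [h D] := Ha (RA i w v :: R) v ((w, DStit i (neg a)) :: G); exists h.+2.
apply: (der_instance (Sstit i w v a) R ((w, DStit i (neg a)) :: G)) => //.
move=> _ [<- | []]; apply: (der_instance (Sdstit i w v (neg a)) R ((v, a) :: G)).
- by [].
- by split; perm_solve.
- by move=> _ [<- | []]; apply: der_equiv D _; split; perm_solve.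
Qed.

Lemma initial_all phi : initial phi.
Proof.
elim: phi => [p | p | a Ha b Hb | a Ha b Hb | a Ha | a Ha | i a Ha | i a Ha].
- exact: initial_var.
- exact: initial_neg (initial_var p).
- exact: initial_and.
- by rewrite -[Or a b]neg_involutive; apply/initial_neg/initial_and; apply: initial_neg.
- exact: initial_box.
- by rewrite -[Dia a]neg_involutive; apply/initial_neg/initial_box/initial_neg.
- exact: initial_stit.
- by rewrite -[DStit i a]neg_involutive; apply/initial_neg/initial_stit/initial_neg.
Qed.

Lemma der_contract_atoms h R R' G : der m n h (R ++ R' ++ R', G) -> der m n h (R ++ R', G).
Proof.
elim: R' R => [// | al R' IH] R D.
have /(proj1 (der_contract h)) D1 : der m n h (al :: al :: R ++ R' ++ R', G).
  by apply: der_equiv D _; split; perm_solve.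
have D2 : der m n h ((R ++ [:: al]) ++ R' ++ R', G) by apply: der_equiv D1 _; split; perm_solve.
by apply: der_equiv (IH _ D2) _; split; perm_solve.
Qed.

Lemma der_contract_forms h R G G' : der m n h (R, G' ++ G' ++ G) -> der m n h (R, G' ++ G).
Proof.
elim: G' G => [// | x G' IH] G D.
have /(proj2 (der_contract h)) D1 : der m n h (R, x :: x :: G' ++ G' ++ G).
  by apply: der_equiv D _; split; perm_solve.
have D2 : der m n h (R, G' ++ G' ++ x :: G) by apply: der_equiv D1 _; split; perm_solve.
by apply: der_equiv (IH _ D2) _; split; perm_solve.
Qed.

End Calculus.

Theorem lemma1 (m n : nat) (Hm : 1 <= m) :
  (* (i) generalized initial sequents *)
  (forall (R : list (ratom m)) (w : label) (phi : form m) (G : list (lform m)),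
      exists h, der m n h (R, (w, phi) :: (w, neg phi) :: G))
  (* (ii) height-preserving admissibility of label substitution *)
  /\ (forall h (S : sequent m) (x y : label),
      der m n h S -> der m n h (subst_seq y x S))
  (* (iii) height-preserving invertibility of all rules *)
  /\ (forall h (P : list (sequent m)) (C : sequent m),
      rule m n P C -> der m n h C -> forall Q, In Q P -> der m n h Q)
  (* (iv) hp-admissibility of weakening and of contraction *)
  /\ (forall h R R' G G',
      der m n h (R, G) -> der m n h (R ++ R', G' ++ G))
  /\ (forall h R R' G,
      der m n h (R ++ R' ++ R', G) -> der m n h (R ++ R', G))
  /\ (forall h R G G',
      der m n h (R, G' ++ G' ++ G) -> der m n h (R, G' ++ G)).
Proof.
(* Everything holds for [m = 0] as well. *)
split; first by move=> R w phi G; apply: initial_all.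
split; first by move=> h S x y; apply: der_rename.
split; first exact: der_rule_inv.
split.
  move=> h R R' G G' /(der_weaken _ _ R' G') D.
  by apply: der_equiv D _; split; perm_solve.
split; [exact: der_contract_atoms | exact: der_contract_forms].
Qed.
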